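(* Let $\delta>0$ with $2\delta<\frac1\delta-1$ and $\delta<\frac14$, let $T_\delta$ be as in the context, let $\phi_\delta(x)=\int_1^x\int_1^y\frac{1}{T_\delta(z)}\,dz\,dy$ and $\phi(x)=x(\log x-1)+1$ (with $\phi(0)=1$). Then: (P1) $\phi_\delta''=\frac{1}{T_\delta}$ and $\phi_\delta(1)=\phi_\delta'(1)=0$; (P2) $\phi_\delta(x)\to\phi(x)$ as $\delta\to0$ for every $x\ge0$; (P3) $\phi_\delta(x)\ge0$ for all $x\in\mathbb{R}$; (P4) $\phi_\delta(x)\le\phi(x)+\frac{\delta}{2(1-\delta)}x^2+3$ for all $x\ge0$; (P5) $\phi_\delta(x)\to\infty$ as $\delta\to0$ for every $x<0$.
   Context: For each admissible $\delta$, $T_\delta:\mathbb{R}\to\mathbb{R}$ is a smooth nondecreasing function with $T_\delta(u)=\delta$ for $u\le\delta$, $T_\delta(u)=u$ for $u\in[2\delta,\frac1\delta-1]$, $T_\delta(u)=\frac1\delta$ for $u\ge\frac1\delta$, and a smooth monotone interpolation on $[\delta,2\delta]$ and on $[\frac1\delta-1,\frac1\delta]$. *)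

From Stdlib Require Import Reals.
From Coquelicot Require Import Coquelicot.
Open Scope R_scope.

Definition admissible (d : R) : Prop :=
  0 < d /\ 2 * d < / d - 1 /\ d < / 4.

Definition is_T_delta (d : R) (T : R -> R) : Prop :=
  (forall (n : nat) (x : R), ex_derive_n T n x) /\
  (forall u v : R, u <= v -> T u <= T v) /\
  (forall u : R, u <= d -> T u = d) /\
  (forall u : R, 2 * d <= u <= / d - 1 -> T u = u) /\
  (forall u : R, / d <= u -> T u = / d).

Definition phi_delta (T : R -> R) (x : R) : R :=
  RInt (fun y => RInt (fun z => / T z) 1 y) 1 x.

Definition phi (x : R) : R :=
  if Req_EM_T x 0 then 1 else x * (ln x - 1) + 1.

From Stdlib Require Import Reals Lra.
From Coquelicot Require Import Coquelicot.
Open Scope R_scope.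

(* By Cauchy's formula for repeated integration,
   phi_delta x = int_1^x (x - z) / T_delta z dz, whose integrand has the sign of the
   orientation of [1, x].  On [2 delta, 1/delta - 1] the kernel is (x - z) / z, whose
   integral is exactly phi x, so phi_delta = phi there.  Elsewhere 1 / T_delta is at
   most 1/delta, equal to 1/delta below delta, and at most delta / (1 - delta) beyond
   1/delta - 1; these bounds control the error near 0 (at most 2 delta at x = 0), the
   quadratic excess for large x, and give phi_delta x >= x^2 / (2 delta) for x < 0. *)

Lemma ex_RInt_continuous_R (f : R -> R) a b :
  (forall z, continuous f z) -> ex_RInt f a b.
Proof. intros Hf. apply (@ex_RInt_continuous R_CompleteNormedModule). intros z _. apply Hf. Qed.

Lemma continuous_kernel (f : R -> R) x z :
  continuous f z -> continuous (fun z => (x - z) * f z) z.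
Proof.
  intros Hf. apply (continuous_mult (fun z => x - z) f); [|exact Hf].
  apply (continuous_minus (fun _ => x) (fun z => z)); [apply continuous_const | apply continuous_id].
Qed.

Lemma continuous_kernel_rev (f : R -> R) x z :
  continuous f z -> continuous (fun z => (z - x) * f z) z.
Proof.
  intros Hf. apply (continuous_mult (fun z => z - x) f); [|exact Hf].
  apply (continuous_minus (fun z => z) (fun _ => x)); [apply continuous_id | apply continuous_const].
Qed.

Lemma is_derive_RInt_continuous (f : R -> R) a x :
  (forall z, continuous f z) -> is_derive (RInt f a) x (f x).
Proof.
  intros Hf. apply is_derive_RInt with (a := a); [|apply Hf].
  apply filter_forall. intros b. apply RInt_correct, ex_RInt_continuous_R, Hf.
Qed.

Lemma RInt_antiderivative (F f : R -> R) a b :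
  (forall x, Rmin a b <= x <= Rmax a b -> is_derive F x (f x)) ->
  (forall x, Rmin a b <= x <= Rmax a b -> continuous f x) ->
  RInt f a b = F b - F a.
Proof. intros HF Hf. apply is_RInt_unique, (is_RInt_derive F f a b HF Hf). Qed.

(* [y * RInt f a y - RInt (fun z => z * f z) a y] is a primitive of [RInt f a]. *)
Lemma RInt_repeated (f : R -> R) a x :
  (forall z, continuous f z) ->
  RInt (fun y => RInt f a y) a x = RInt (fun z => (x - z) * f z) a x.
Proof.
  intros Hf.
  assert (Hzf : forall z, continuous (fun z => z * f z) z).
  { intros z. apply (continuous_mult (fun z => z) f); [apply continuous_id | apply Hf]. }
  rewrite (RInt_antiderivative (fun y => y * RInt f a y - RInt (fun z => z * f z) a y)).
  - rewrite !RInt_point.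
    transitivity (RInt (fun z => minus (scal x (f z)) (z * f z)) a x).
    + rewrite (@RInt_minus R_CompleteNormedModule), (@RInt_scal R_CompleteNormedModule);
        try apply ex_RInt_continuous_R; try easy.
      * unfold minus, plus, opp, scal, zero; simpl; unfold mult; simpl. ring.
      * intros z. apply (continuous_scal_r x f), Hf.
    + apply RInt_ext. intros z _. unfold minus, plus, opp, scal; simpl; unfold mult; simpl. ring.
  - intros y _.
    assert (Hprod := is_derive_mult (fun y => y) (RInt f a) y _ _
                       (is_derive_id y) (is_derive_RInt_continuous f a y Hf) Rmult_comm).
    assert (Hdiff := is_derive_minus _ _ y _ _ Hprod (is_derive_RInt_continuous _ a y Hzf)).
    replace (RInt f a y) with (minus (plus (mult one (RInt f a y)) (mult y (f y))) (y * f y)).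
    + exact Hdiff.
    + unfold minus, plus, opp, mult, one; simpl. ring.
  - intros y _. apply (ex_derive_continuous (RInt f a)).
    eexists. apply is_derive_RInt_continuous, Hf.
Qed.

Lemma RInt_kernel_swap (f : R -> R) a x :
  (forall z, continuous f z) ->
  RInt (fun z => (x - z) * f z) a x = RInt (fun z => (z - x) * f z) x a.
Proof.
  intros Hf.
  assert (Hint : ex_RInt (fun z => (x - z) * f z) x a).
  { apply ex_RInt_continuous_R. intros z. apply continuous_kernel, Hf. }
  rewrite <- (opp_RInt_swap _ _ _ Hint), <- (RInt_opp _ _ _ Hint).
  apply RInt_ext. intros z _. unfold opp; simpl. ring.
Qed.

Lemma RInt_kernel_ge0 (f : R -> R) a x :
  (forall z, continuous f z) -> (forall z, 0 <= f z) ->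
  0 <= RInt (fun z => (x - z) * f z) a x.
Proof.
  intros Hf Hpos. destruct (Rle_dec a x) as [Hax | Hxa].
  - apply RInt_ge_0; [exact Hax | |].
    + apply ex_RInt_continuous_R. intros z. apply continuous_kernel, Hf.
    + intros z Hz. apply Rmult_le_pos; [lra | apply Hpos].
  - rewrite RInt_kernel_swap by exact Hf. apply RInt_ge_0; [lra | |].
    + apply ex_RInt_continuous_R. intros z. apply continuous_kernel_rev, Hf.
    + intros z Hz. apply Rmult_le_pos; [lra | apply Hpos].
Qed.

Lemma phi_pos_eq x : 0 < x -> phi x = x * (ln x - 1) + 1.
Proof. intros Hx. unfold phi. destruct (Req_EM_T x 0); [lra | reflexivity]. Qed.

Lemma phi_ge0 x : 0 <= x -> 0 <= phi x.
Proof.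
  intros Hx. destruct (Req_dec x 0) as [-> | Hx0].
  - unfold phi. destruct (Req_EM_T 0 0); lra.
  - rewrite phi_pos_eq by lra.
    assert (Hexp := exp_ineq1_le (- ln x)).
    rewrite exp_Ropp, exp_ln in Hexp by lra.
    assert (Hmul : x * (1 - ln x) <= x * / x) by (apply Rmult_le_compat_l; lra).
    rewrite Rinv_r in Hmul by lra. nra.
Qed.

Lemma RInt_kernel_inv_const x c :
  0 < x -> RInt (fun z => (x - z) * (/ z + c)) 1 x = phi x + c * (x - 1) ^ 2 / 2.
Proof.
  intros Hx. rewrite phi_pos_eq by exact Hx.
  assert (Hpos : forall z, Rmin 1 x <= z <= Rmax 1 x -> 0 < z).
  { intros z [Hz _]. apply Rlt_le_trans with (Rmin 1 x); [apply Rmin_glb_lt; lra | exact Hz]. }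
  pose (F z := x * ln z - z - c * (x - z) ^ 2 / 2).
  replace (x * (ln x - 1) + 1 + c * (x - 1) ^ 2 / 2) with (F x - F 1)
    by (unfold F; rewrite ln_1; field).
  apply RInt_antiderivative; intros z Hz; specialize (Hpos z Hz); unfold F.
  - auto_derive; [lra | field; lra].
  - apply (@ex_derive_continuous R_AbsRing R_NormedModule). auto_derive. lra.
Qed.

Lemma RInt_kernel_inv x : 0 < x -> RInt (fun z => (x - z) * / z) 1 x = phi x.
Proof.
  intros Hx. replace (phi x) with (phi x + 0 * (x - 1) ^ 2 / 2) by field.
  rewrite <- (RInt_kernel_inv_const x 0 Hx).
  apply RInt_ext. intros z _. rewrite Rplus_0_r. reflexivity.
Qed.

Lemma RInt_kernel_rev_const x b c : RInt (fun z => (z - x) * c) x b = c * (b - x) ^ 2 / 2.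
Proof.
  replace (c * (b - x) ^ 2 / 2) with (c * (b - x) ^ 2 / 2 - c * (x - x) ^ 2 / 2) by field.
  apply (RInt_antiderivative (fun z => c * (z - x) ^ 2 / 2)); intros z _.
  - auto_derive; [easy | field].
  - apply (@ex_derive_continuous R_AbsRing R_NormedModule). auto_derive. easy.
Qed.

Lemma admissible_of_lt d : 0 < d < / 4 -> admissible d.
Proof.
  intros [Hd0 Hd4]. split; [exact Hd0 | split; [| exact Hd4]].
  assert (Hinv : / / 4 < / d) by (apply Rinv_lt_contravar; nra).
  rewrite Rinv_inv in Hinv. lra.
Qed.

Lemma at_right0_admissible_lt e :
  0 < e -> at_right 0 (fun d => admissible d /\ d < e).
Proof.
  intros He. assert (Hr : 0 < Rmin e (/ 4)) by (apply Rmin_glb_lt; lra).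
  exists (mkposreal _ Hr). intros d Hball Hd0.
  change (Rabs (d - 0) < Rmin e (/ 4)) in Hball.
  rewrite Rminus_0_r, Rabs_pos_eq in Hball by lra.
  assert (Rmin e (/ 4) <= e) by apply Rmin_l. assert (Rmin e (/ 4) <= / 4) by apply Rmin_r.
  split; [apply admissible_of_lt |]; lra.
Qed.

Section Truncation.

Variables (d : R) (T : R -> R).
Hypothesis Hd : admissible d.
Hypothesis HT : is_T_delta d T.

Lemma admissible_bounds : 0 < d /\ 2 * d < 1 /\ 3 < / d - 1.
Proof.
  destruct Hd as [Hd0 [_ Hd4]].
  assert (Hinv : / / 4 < / d) by (apply Rinv_lt_contravar; nra).
  rewrite Rinv_inv in Hinv. lra.
Qed.

Lemma T_ge u : d <= T u.
Proof.
  destruct HT as [_ [Hmono [Hlow _]]].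
  destruct (Rle_dec u d) as [Hu | Hu].
  - rewrite Hlow; lra.
  - rewrite <- (Hlow d) at 1 by lra. apply Hmono. lra.
Qed.

Lemma invT_continuous u : continuous (fun z => / T z) u.
Proof.
  destruct admissible_bounds as [Hd0 _]. destruct HT as [Hsmooth _].
  apply continuous_Rinv_comp.
  - apply (@ex_derive_continuous R_AbsRing R_NormedModule), (Hsmooth 1%nat u).
  - pose proof (T_ge u). lra.
Qed.

Lemma invT_pos u : 0 < / T u.
Proof. destruct admissible_bounds as [Hd0 _]. pose proof (T_ge u). apply Rinv_0_lt_compat. lra. Qed.

Lemma invT_le u : / T u <= / d.
Proof. destruct admissible_bounds as [Hd0 _]. apply Rinv_le_contravar; [lra | apply T_ge]. Qed.

Lemma invT_low u : u <= d -> / T u = / d.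
Proof. intros Hu. destruct HT as [_ [_ [Hlow _]]]. rewrite Hlow by exact Hu. reflexivity. Qed.

Lemma invT_mid u : 2 * d <= u <= / d - 1 -> / T u = / u.
Proof. intros Hu. destruct HT as [_ [_ [_ [Hmid _]]]]. rewrite Hmid by exact Hu. reflexivity. Qed.

Lemma invT_le_inv_add u : 2 * d <= u -> / T u <= / u + d / (1 - d).
Proof.
  intros Hu. destruct admissible_bounds as [Hd0 [Hd1 Hd2]].
  assert (Hinv : 0 < / u) by (apply Rinv_0_lt_compat; lra).
  destruct (Rle_dec u (/ d - 1)) as [Hmid | Hhigh].
  - rewrite invT_mid by lra. assert (0 <= d / (1 - d)) by (apply Rdiv_le_0_compat; lra). lra.
  - destruct HT as [_ [Hmono [_ [HTmid _]]]].
    assert (HTu : / d - 1 <= T u) by (rewrite <- (HTmid (/ d - 1)) at 1 by lra; apply Hmono; lra).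
    replace (d / (1 - d)) with (/ (/ d - 1)) by (field; lra).
    assert (/ T u <= / (/ d - 1)) by (apply Rinv_le_contravar; lra). lra.
Qed.

Lemma phi_delta_kernel x : phi_delta T x = RInt (fun z => (x - z) * / T z) 1 x.
Proof. unfold phi_delta. apply RInt_repeated, invT_continuous. Qed.

Lemma phi_delta_kernel_rev x : phi_delta T x = RInt (fun z => (z - x) * / T z) x 1.
Proof. rewrite phi_delta_kernel. apply RInt_kernel_swap, invT_continuous. Qed.

Lemma ex_RInt_kernel_rev x a b : ex_RInt (fun z => (z - x) * / T z) a b.
Proof. apply ex_RInt_continuous_R. intros z. apply continuous_kernel_rev, invT_continuous. Qed.

Lemma is_derive_phi_delta x : is_derive (phi_delta T) x (RInt (fun z => / T z) 1 x).
Proof.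
  apply (is_derive_RInt_continuous (RInt (fun z => / T z) 1)). intros y.
  apply (@ex_derive_continuous R_AbsRing R_NormedModule). eexists.
  apply is_derive_RInt_continuous, invT_continuous.
Qed.

Lemma phi_delta_ge0 x : 0 <= phi_delta T x.
Proof.
  rewrite phi_delta_kernel. apply RInt_kernel_ge0; [apply invT_continuous |].
  intros z. apply Rlt_le, invT_pos.
Qed.

Lemma phi_delta_eq_phi x : 2 * d <= x <= / d - 1 -> phi_delta T x = phi x.
Proof.
  intros Hx. destruct admissible_bounds as [Hd0 [Hd1 Hd2]].
  rewrite phi_delta_kernel, <- RInt_kernel_inv by lra.
  apply RInt_ext. intros z Hz.
  assert (Rmin 1 x <= z <= Rmax 1 x) by (split; apply Rlt_le, Hz).
  assert (2 * d <= Rmin 1 x) by (apply Rmin_glb; lra).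
  assert (Rmax 1 x <= / d - 1) by (apply Rmax_lub; lra).
  rewrite invT_mid by lra. reflexivity.
Qed.

Lemma kernel_rev_bound x z : 0 <= x <= z -> z <= 1 -> 0 <= (z - x) * / T z <= 2.
Proof.
  intros Hxz Hz1. destruct admissible_bounds as [Hd0 [Hd1 Hd2]].
  split; [apply Rmult_le_pos; [lra | apply Rlt_le, invT_pos] |].
  destruct (Rle_dec z (2 * d)) as [Hlow | Hmid].
  - pose proof (invT_le z). pose proof (invT_pos z).
    assert (Hbound : (z - x) * / T z <= 2 * d * / d) by (apply Rmult_le_compat; lra).
    replace (2 * d * / d) with 2 in Hbound by (field; lra). exact Hbound.
  - rewrite invT_mid by lra.
    replace ((z - x) * / z) with (1 - x / z) by (field; lra).
    assert (0 <= x / z) by (apply Rdiv_le_0_compat; lra). lra.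
Qed.

Lemma phi_delta_le_2 x : 0 <= x <= 1 -> phi_delta T x <= 2.
Proof.
  intros Hx. rewrite phi_delta_kernel_rev.
  eapply Rle_trans; [apply Rle_abs |].
  eapply Rle_trans; [apply abs_RInt_le_const with (M := 2) |]; try lra.
  - apply ex_RInt_kernel_rev.
  - intros z Hz. pose proof (kernel_rev_bound x z (conj (proj1 Hx) (proj1 Hz)) (proj2 Hz)).
    rewrite Rabs_pos_eq; lra.
Qed.

Lemma phi_delta_le_large x :
  1 <= x -> phi_delta T x <= phi x + d / (1 - d) * (x - 1) ^ 2 / 2.
Proof.
  intros Hx. destruct admissible_bounds as [Hd0 [Hd1 Hd2]].
  rewrite phi_delta_kernel, <- RInt_kernel_inv_const by lra.
  apply RInt_le; [exact Hx | | |].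
  - apply ex_RInt_continuous_R. intros z. apply continuous_kernel, invT_continuous.
  - apply (@ex_RInt_continuous R_CompleteNormedModule). intros z Hz.
    rewrite Rmin_left, Rmax_right in Hz by lra.
    apply (@ex_derive_continuous R_AbsRing R_NormedModule). auto_derive. lra.
  - intros z Hz. apply Rmult_le_compat_l; [lra |]. apply invT_le_inv_add. lra.
Qed.

Lemma phi_delta_le x : 0 <= x -> phi_delta T x <= phi x + d / (2 * (1 - d)) * x ^ 2 + 3.
Proof.
  intros Hx. destruct admissible_bounds as [Hd0 [Hd1 Hd2]].
  assert (Hc : 0 <= d / (2 * (1 - d))) by (apply Rdiv_le_0_compat; lra).
  assert (Hquad : 0 <= d / (2 * (1 - d)) * x ^ 2) by (apply Rmult_le_pos; nra).
  pose proof (phi_ge0 x Hx).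
  destruct (Rle_dec x 1) as [Hsmall | Hlarge].
  - pose proof (phi_delta_le_2 x (conj Hx Hsmall)). lra.
  - pose proof (phi_delta_le_large x ltac:(lra)) as Hlarge_bound.
    replace (d / (1 - d) * (x - 1) ^ 2 / 2) with (d / (2 * (1 - d)) * (x - 1) ^ 2)
      in Hlarge_bound by (field; lra).
    assert (d / (2 * (1 - d)) * (x - 1) ^ 2 <= d / (2 * (1 - d)) * x ^ 2)
      by (apply Rmult_le_compat_l; nra).
    lra.
Qed.

Lemma phi_delta_0_near_1 : Rabs (phi_delta T 0 - 1) <= 2 * d.
Proof.
  destruct admissible_bounds as [Hd0 [Hd1 Hd2]].
  rewrite phi_delta_kernel_rev, <- (RInt_Chasles _ 0 (2 * d) 1) by apply ex_RInt_kernel_rev.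
  assert (Hnear0 : Rabs (RInt (fun z => (z - 0) * / T z) 0 (2 * d)) <= (2 * d - 0) * 2).
  { apply abs_RInt_le_const; [lra | apply ex_RInt_kernel_rev |].
    intros z Hz. pose proof (kernel_rev_bound 0 z ltac:(lra) ltac:(lra)).
    rewrite Rabs_pos_eq; lra. }
  assert (Hnear0_ge : 0 <= RInt (fun z => (z - 0) * / T z) 0 (2 * d)).
  { apply RInt_ge_0; [lra | apply ex_RInt_kernel_rev |].
    intros z Hz. apply (kernel_rev_bound 0 z); lra. }
  assert (Hrest : RInt (fun z => (z - 0) * / T z) (2 * d) 1 = 1 - 2 * d).
  { rewrite (RInt_ext _ (fun _ => 1)), RInt_const.
    - apply Rmult_1_r.
    - intros z Hz. rewrite Rmin_left, Rmax_right in Hz by lra.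
      rewrite invT_mid, Rminus_0_r by lra. apply Rinv_r. lra. }
  rewrite Hrest. unfold plus; simpl.
  rewrite Rabs_le_between in Hnear0 |- *. lra.
Qed.

Lemma phi_delta_neg_ge x : x < 0 -> x ^ 2 / 2 * / d <= phi_delta T x.
Proof.
  intros Hx. destruct admissible_bounds as [Hd0 [Hd1 Hd2]].
  rewrite phi_delta_kernel_rev, <- (RInt_Chasles _ x 0 1) by apply ex_RInt_kernel_rev.
  assert (Hpos : 0 <= RInt (fun z => (z - x) * / T z) 0 1).
  { apply RInt_ge_0; [lra | apply ex_RInt_kernel_rev |].
    intros z Hz. apply Rmult_le_pos; [lra | apply Rlt_le, invT_pos]. }
  rewrite (RInt_ext _ (fun z => (z - x) * / d)), RInt_kernel_rev_const.
  - unfold plus; simpl. replace ((0 - x) ^ 2) with (x ^ 2) by ring. lra.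
  - intros z Hz. rewrite Rmin_left, Rmax_right in Hz by lra.
    rewrite invT_low by lra. reflexivity.
Qed.

End Truncation.

Lemma phi_delta_cvg_phi (T : R -> R -> R)
  (HT : forall d, admissible d -> is_T_delta d (T d)) x :
  0 <= x -> filterlim (fun d => phi_delta (T d) x) (at_right 0) (locally (phi x)).
Proof.
  intros Hx. destruct (Req_dec x 0) as [-> | Hx0].
  - apply filterlim_locally. intros eps.
    apply (filter_imp (fun d => admissible d /\ d < eps / 2));
      [| apply at_right0_admissible_lt; pose proof (cond_pos eps); lra].
    intros d [Hd Hdeps]. pose proof (phi_delta_0_near_1 d _ Hd (HT d Hd)).
    change (Rabs (phi_delta (T d) 0 - phi 0) < eps).
    unfold phi. destruct (Req_EM_T 0 0); lra.
  - apply (filterlim_ext_loc (fun _ => phi x)); [| apply filterlim_const].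
    apply (filter_imp (fun d => admissible d /\ d < Rmin (x / 2) (/ (x + 2))));
      [| apply at_right0_admissible_lt, Rmin_glb_lt; [lra | apply Rinv_0_lt_compat; lra]].
    intros d [Hd Hdx].
    assert (d < x / 2) by (eapply Rlt_le_trans; [exact Hdx | apply Rmin_l]).
    assert (d < / (x + 2)) by (eapply Rlt_le_trans; [exact Hdx | apply Rmin_r]).
    assert (x + 2 < / d).
    { rewrite <- (Rinv_inv (x + 2)). apply Rinv_lt_contravar; [| lra].
      destruct Hd. apply Rmult_lt_0_compat; lra. }
    symmetry. apply (phi_delta_eq_phi d _ Hd (HT d Hd)). lra.
Qed.

Lemma phi_delta_cvg_p_infty (T : R -> R -> R)
  (HT : forall d, admissible d -> is_T_delta d (T d)) x :
  x < 0 -> filterlim (fun d => phi_delta (T d) x) (at_right 0) (Rbar_locally p_infty).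
Proof.
  intros Hx. apply (filterlim_ge_p_infty (fun d => x ^ 2 / 2 * / d)).
  - apply (filter_imp (fun d => admissible d /\ d < 1)); [| apply at_right0_admissible_lt; lra].
    intros d [Hd _]. apply (phi_delta_neg_ge d _ Hd (HT d Hd) x Hx).
  - eapply filterlim_comp; [apply filterlim_Rinv_0_right |].
    replace p_infty with (Rbar_mult (x ^ 2 / 2) p_infty) at 2.
    + apply filterlim_Rbar_mult_l.
    + apply is_Rbar_mult_unique, is_Rbar_mult_sym, is_Rbar_mult_p_infty_pos. simpl. nra.
Qed.

Theorem lemma2p1 (T : R -> R -> R)
  (HT : forall d : R, admissible d -> is_T_delta d (T d)) :
  (* (P1) *)
  (forall d : R, admissible d ->
     exists dphi : R -> R,
       (forall x : R, is_derive (phi_delta (T d)) x (dphi x)) /\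
       (forall x : R, is_derive dphi x (/ T d x)) /\
       phi_delta (T d) 1 = 0 /\ dphi 1 = 0) /\
  (* (P2) *)
  (forall x : R, 0 <= x ->
     filterlim (fun d => phi_delta (T d) x) (at_right 0) (locally (phi x))) /\
  (* (P3) *)
  (forall d : R, admissible d -> forall x : R, 0 <= phi_delta (T d) x) /\
  (* (P4) *)
  (forall d : R, admissible d -> forall x : R, 0 <= x ->
     phi_delta (T d) x <= phi x + d / (2 * (1 - d)) * x ^ 2 + 3) /\
  (* (P5) *)
  (forall x : R, x < 0 ->
     filterlim (fun d => phi_delta (T d) x) (at_right 0) (Rbar_locally p_infty)).
Proof.
  split; [| split; [| split; [| split]]].
  - intros d Hd. exists (RInt (fun z => / T d z) 1).
    split; [| split; [| split]].
    + apply (is_derive_phi_delta d _ Hd (HT d Hd)).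
    + intros x. apply (is_derive_RInt_continuous (fun z => / T d z)).
      apply (invT_continuous d _ Hd (HT d Hd)).
    + unfold phi_delta. rewrite RInt_point. reflexivity.
    + rewrite RInt_point. reflexivity.
  - apply (phi_delta_cvg_phi T HT).
  - intros d Hd. apply (phi_delta_ge0 d _ Hd (HT d Hd)).
  - intros d Hd. apply (phi_delta_le d _ Hd (HT d Hd)).
  - apply (phi_delta_cvg_p_infty T HT).
Qed.
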